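(* Let $k$ be a positive integer and $i$ an integer with $1\le i<\left\lfloor\frac{k+1}2\right\rfloor$. Then $\beta=\frac1{i^2}$ is a zero of the polynomial $P_k(1,\beta,0)$ of multiplicity at least $\left\lfloor\frac{k+1}2\right\rfloor-i$.
   Context: Define $\widetilde c_n\in\mathbb Q[\beta]$ by $\widetilde c_0=2$, $\widetilde c_1=1$, $(n+1)\widetilde c_{n+1}=\widetilde c_n+\frac\beta4(n-1)\widetilde c_{n-1}$ for $n\ge1$, and $\widetilde c_n=0$ for $n<0$. $P_k(1,\beta,0)$ is the $k\times k$ determinant with $(j,l)$ entry $\widetilde c_{k-2(j-1)+(l-1)}$, $1\le j,l\le k$. *)

(* Polynomials in beta over Q: {poly rat}, beta = 'X. *)
From HB Require Import structures.
From mathcomp Require Import all_boot all_order all_algebra.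
Set Implicit Arguments. Unset Strict Implicit. Unset Printing Implicit Defensive.
Import Order.TTheory GRing.Theory Num.Theory.
Local Open Scope ring_scope.

(* ctpair n = (c~_n, c~_{n+1}).
   c~_0 = 2, c~_1 = 1,
   (m+1) c~_{m+1} = c~_m + (beta/4) (m-1) c~_{m-1}  for m >= 1;
   with m = n+1:  c~_{n+2} = (n+2)^-1 (c~_{n+1} + (n/4) beta c~_n). *)
Fixpoint ctpair (n : nat) : {poly rat} * {poly rat} :=
  match n with
  | 0%N => (2%:P, 1%:P)
  | n'.+1 =>
      let: (a, b) := ctpair n' in
      (b, ((n'.+2)%:R)^-1 *: (b + ((n'%:R) / 4) *: ('X * a)))
  end.

Definition ctn (n : nat) : {poly rat} := (ctpair n).1.

Definition ct (n : int) : {poly rat} :=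
  match n with
  | Posz m => ctn m
  | Negz _ => 0
  end.

(* P_k(1,beta,0): k x k determinant with (j,l) entry c~_{k-2(j-1)+(l-1)},
   1 <= j,l <= k; here with 0-based indices j,l < k. *)
Definition Pk (k : nat) : {poly rat} :=
  \det (\matrix_(j < k, l < k) ct (k%:Z - 2 * (j : nat)%:Z + (l : nat)%:Z)).

(* At beta = 1/i^2 the values d_n = c~_n(beta), with d_0 := 1, satisfy
   (2i)^2 (n+1) d_(n+1) = (2i)^2 d_n + (n-1) d_(n-1).  Applying [b - T], with T the
   shift f_n |-> f_(n-1), turns a solution of
   b^2 (n+1) f_(n+1) = (b^2 - b p) f_n + (n-p-1) f_(n-1)  into one with p+1, and for
   b = 2p such a solution vanishes beyond p.  Hence (2i - T)^i d is finitely supported,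
   so every window (d_n, ..., d_(n+k-1)) with n >= 1 lies in the span of the first i
   windows.  The first floor((k+1)/2) rows of the matrix evaluated at 1/i^2 are such
   windows, which bounds its rank by i + k - floor((k+1)/2); a rank defect r at x forces
   ('X - x)^r to divide the determinant. *)

From HB Require Import structures.
From mathcomp Require Import all_boot all_order all_algebra.
From mathcomp Require Import ring zify.
Set Implicit Arguments. Unset Strict Implicit. Unset Printing Implicit Defensive.
Import Order.TTheory GRing.Theory Num.Theory.
Local Open Scope ring_scope.

Definition delay (R : zmodType) (f : nat -> R) (n : nat) : R :=
  if n is n'.+1 then f n' else 0.

Definition sub_delay (R : pzRingType) (b : R) (f : nat -> R) (n : nat) : R :=
  b * f n - delay f n.

Section ThreeTermRecurrence.
Variable F : numFieldType.

Definition rec_defect (b : F) (p : nat) (f : nat -> F) (n : nat) : F :=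
  b ^+ 2 * n.+1%:R * f n.+1 - (b ^+ 2 - b * p%:R) * f n - (n%:R - p.+1%:R) * delay f n.

Lemma rec_defect_sub_delay b p f n :
  rec_defect b p.+1 (sub_delay b f) n = sub_delay b (rec_defect b p f) n.
Proof. by case: n => [|n]; rewrite /rec_defect /sub_delay /=; ring. Qed.

Lemma rec_defect_iter b p f : (forall n, rec_defect b 0 f n = 0) ->
  forall n, rec_defect b p (iter p (sub_delay b) f) n = 0.
Proof.
move=> f_rec; elim: p => [|p IH] n //=.
by rewrite rec_defect_sub_delay /sub_delay IH; case: n => [|n] /=; rewrite ?IH mulr0 subr0.
Qed.

Lemma rec_defect_vanish p g : (0 < p)%N -> (forall n, rec_defect (2 * p%:R) p g n = 0) ->
  forall n, (p < n)%N -> g n = 0.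
Proof.
move=> p_gt0 g_rec; set b : F := 2 * p%:R.
have b_neq0 : b != 0 by rewrite mulf_neq0 ?pnatr_eq0 -?lt0n.
(* [b = 2p] is exactly what makes [b h - delay h] the defect of [g]. *)
pose h n := b * n.+1%:R * g n.+1 + (n%:R - p%:R) * g n.
have h_rec n : sub_delay b h n = rec_defect b p g n.
  by case: n => [|n]; rewrite /sub_delay /rec_defect /h /b /=; ring.
have h0 n : h n = 0.
  elim: n => [|n IH]; [have := h_rec 0%N | have := h_rec n.+1];
    by rewrite g_rec /sub_delay /= ?IH subr0 => /eqP; rewrite mulf_eq0 (negPf b_neq0) => /eqP.
have gS n : (n%:R - p%:R) * g n = 0 -> g n.+1 = 0.
  move=> gn; have := h0 n; rewrite /h gn addr0 => /eqP.
  by rewrite mulf_eq0 mulf_eq0 (negPf b_neq0) pnatr_eq0 /= => /eqP.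
case=> // n; rewrite ltnS; elim: n => [|n IH]; first by rewrite leqNgt p_gt0.
rewrite leq_eqVlt => /orP[/eqP <-|/IH gn]; apply: gS; first by rewrite subrr mul0r.
by rewrite gn mulr0.
Qed.

End ThreeTermRecurrence.

Section Windows.
Variables (F : fieldType) (k : nat).

Definition window (s : nat -> F) (n : nat) : 'rV[F]_k := \row_(l < k) s (n + l)%N.

Definition windows (s : nat -> F) (m p : nat) : 'M[F]_(p, k) :=
  \matrix_(a < p) window s (m + a).

Lemma windows_shift s m p : (windows s m.+1 p <= windows s m p.+1)%MS.
Proof.
apply/row_subP => a; rewrite rowK.
have -> : window s (m.+1 + a) = row (lift ord0 a) (windows s m p.+1).
  by rewrite rowK /= /bump /= add1n addnS.
exact: row_sub.
Qed.

Lemma windowsS s m p : (windows s m p <= windows s m p.+1)%MS.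
Proof.
apply/row_subP => a; rewrite rowK.
have -> : window s (m + a) = row (widen_ord (leqnSn p) a) (windows s m p.+1).
  by rewrite rowK.
exact: row_sub.
Qed.

Lemma window_windows s m p : (window s (m + p) <= windows s m p.+1)%MS.
Proof.
have -> : window s (m + p) = row ord_max (windows s m p.+1) by rewrite rowK.
exact: row_sub.
Qed.

Lemma window_iter_sub_delay b s p m :
  (window (iter p (sub_delay b) s) (m + p) - b ^+ p *: window s (m + p)
     <= windows s m p)%MS.
Proof.
elim: p m => [|p IH] m; first by rewrite expr0 scale1r subrr sub0mx.
set t := iter p (sub_delay b) s.
have -> : window (iter p.+1 (sub_delay b) s) (m + p.+1) - b ^+ p.+1 *: window s (m + p.+1) =
    b *: (window t (m.+1 + p) - b ^+ p *: window s (m.+1 + p))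
    - (window t (m + p) - b ^+ p *: window s (m + p)) - b ^+ p *: window s (m + p).
  by apply/rowP => l; rewrite !mxE !addnS !addSn iterS -/t /sub_delay /= exprS; ring.
apply: addmx_sub; first apply: addmx_sub.
- by apply: scalemx_sub; apply: submx_trans (IH m.+1) (windows_shift _ _ _).
- by rewrite eqmx_opp; apply: submx_trans (IH m) (windowsS _ _ _).
- by rewrite eqmx_opp; apply: scalemx_sub; apply: window_windows.
Qed.

Lemma window_sub_windows (b : F) s p : b != 0 ->
    (forall n, (p < n)%N -> iter p (sub_delay b) s n = 0) ->
  forall n, (0 < n)%N -> (window s n <= windows s 1 p)%MS.
Proof.
move=> b_neq0 s_vanish; elim/ltn_ind => n IH n_gt0.
have [le_np | lt_pn] := leqP n p.
  have lt_n1p : (n.-1 < p)%N by rewrite prednK.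
  have -> : window s n = row (Ordinal lt_n1p) (windows s 1 p).
    by rewrite rowK /= add1n prednK.
  exact: row_sub.
have := window_iter_sub_delay b s p (n - p); rewrite subnK; last exact: ltnW.
have -> : window (iter p (sub_delay b) s) n = 0.
  by apply/rowP => l; rewrite !mxE s_vanish // (leq_trans lt_pn) ?leq_addr.
rewrite sub0r eqmx_opp => /(scalemx_sub (b ^+ p)^-1).
rewrite scalerA mulVf ?expf_neq0 // scale1r => /submx_trans; apply.
by apply/row_subP => a; rewrite rowK; apply: IH; have := ltn_ord a; lia.
Qed.

End Windows.

Lemma mxrank_rows_sub (F : fieldType) m n h p (A : 'M[F]_(m, n)) (S : 'M[F]_(p, n)) :
  (forall j : 'I_m, (j < h)%N -> (row j A <= S)%MS) -> (\rank A <= \rank S + (m - h))%N.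
Proof.
move=> A_top.
have low_lt (j : 'I_(m - h)) : (h + j < m)%N by rewrite -ltn_subRL.
pose B : 'M[F]_(m - h, n) := \matrix_j row (Ordinal (low_lt j)) A.
have sub_AB : (A <= S + B)%MS.
  apply/row_subP => j; have [lt_jh | le_hj] := ltnP j h.
    exact: submx_trans (A_top j lt_jh) (addsmxSl _ _).
  have lt_jh : (j - h < m - h)%N by have := ltn_ord j; lia.
  have -> : row j A = row (Ordinal lt_jh) B.
    by rewrite rowK; congr row; apply: val_inj; rewrite /= subnKC.
  exact: submx_trans (row_sub _ _) (addsmxSr _ _).
have [rank_adds _] := mxrank_adds_leqif S B.
by rewrite (leq_trans (mxrankS sub_AB)) // (leq_trans rank_adds) // leq_add2l rank_leq_row.
Qed.

Lemma prodr_ord_if_leq (R : pzSemiRingType) (c : R) r n :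
  \prod_(j < n) (if (r <= j)%N then c else 1) = c ^+ (n - r).
Proof.
elim: n => [|n IH]; first by rewrite big_ord0 sub0n expr0.
rewrite big_ord_recr IH /= -[RHS]mulr1; have [le_rn | lt_nr] := leqP r n.
  by rewrite subSn // exprSr mulr1.
have /eqP -> : (n.+1 - r == 0)%N by rewrite subn_eq0.
by have /eqP -> : (n - r == 0)%N by rewrite subn_eq0 ltnW.
Qed.

Lemma dvdp_det_rows (F : fieldType) n r (A : 'M[{poly F}]_n) (x : F) :
  (forall j l : 'I_n, (r <= j)%N -> root (A j l) x) -> ('X - x%:P) ^+ (n - r) %| \det A.
Proof.
move=> A_root.
pose d : 'rV[{poly F}]_n := \row_j (if (r <= j)%N then 'X - x%:P else 1).
pose Q : 'M[{poly F}]_n :=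
  \matrix_(j, l) (if (r <= j)%N then A j l %/ ('X - x%:P) else A j l).
have -> : A = diag_mx d *m Q.
  apply/matrixP => j l; rewrite mul_diag_mx !mxE.
  case: ifP => le_rj; last by rewrite mul1r.
  by rewrite mulrC divpK // dvdp_XsubCl A_root.
rewrite det_mulmx det_diag; apply: dvdp_mulr.
by under eq_bigr do rewrite mxE; rewrite prodr_ord_if_leq.
Qed.

Lemma dvdp_det_rank (F : fieldType) n r (A : 'M[{poly F}]_n) (x : F) :
  (\rank (map_mx (horner_eval x) A) + r <= n)%N -> ('X - x%:P) ^+ r %| \det A.
Proof.
set Ax := map_mx _ A => rank_r.
pose P := invmx (col_ebase Ax).
have P_unit : P \in unitmx by rewrite unitmx_inv col_ebase_unit.
have PAx : P *m Ax = pid_mx (\rank Ax) *m row_ebase Ax.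
  by rewrite -{1}(mulmx_ebase Ax) -!mulmxA mulKmx ?col_ebase_unit.
pose PA := map_mx polyC P *m A.
have eval_PA : map_mx (horner_eval x) PA = P *m Ax.
  by rewrite map_mxM; congr (_ *m _); apply/matrixP => a b; rewrite !mxE; exact: hornerC.
have PA_root (j l : 'I_n) : (\rank Ax <= j)%N -> root (PA j l) x.
  move=> le_rj; apply/eqP; move: eval_PA; rewrite PAx => /matrixP/(_ j l).
  rewrite [in X in X = _]mxE horner_evalE => ->; rewrite mxE big1 // => t _.
  by rewrite mxE ltnNge le_rj andbF mul0r.
have detP_neq0 : \det P != 0 by rewrite -unitfE -unitmxE.
have := dvdp_det_rows PA_root.
rewrite det_mulmx (det_map_mx polyC) mul_polyC dvdpZr // => /(dvdp_trans _); apply.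
by rewrite dvdp_exp2l //; lia.
Qed.

(* [c~_0 = 2] is replaced by [1] so that the recurrence also holds at [n = 0];
   only the values at [n >= 1] enter the determinant. *)
Definition ctval (x : rat) (n : nat) : rat := if n is 0 then 1 else (ctn n).[x].

Lemma ctnSS n : ctn n.+2 = n.+2%:R^-1 *: (ctn n.+1 + (n%:R / 4) *: ('X * ctn n)).
Proof. by rewrite /ctn /=; case: (ctpair n). Qed.

Lemma ctval_rec_defect i : (0 < i)%N ->
  forall n, rec_defect (2 * i%:R) 0 (ctval (i ^ 2)%:R^-1) n = 0.
Proof.
move=> i_gt0; have i_neq0 : (i%:R : rat) != 0 by rewrite pnatr_eq0 -lt0n.
case=> [|n]; first by rewrite /rec_defect /ctval /ctn /= hornerC; ring.
rewrite /rec_defect /ctval ctnSS hornerZ hornerD hornerZ (mulrC 'X) hornerMX natrX /=.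
by case: n => [|n]; field; rewrite i_neq0 // -(natrD _ 3 n) pnatr_eq0.
Qed.

Definition Pk_mx (k : nat) : 'M[{poly rat}]_k :=
  \matrix_(j < k, l < k) ct (k%:Z - 2 * (j : nat)%:Z + (l : nat)%:Z).

Lemma row_Pk_mx_eval k x (j : 'I_k) : (2 * j < k)%N ->
  row j (map_mx (horner_eval x) (Pk_mx k)) = window k (ctval x) (k - 2 * j).
Proof.
move=> lt_2j_k; apply/rowP => l; rewrite !mxE horner_evalE.
have -> : k%:Z - 2 * (j : nat)%:Z + (l : nat)%:Z = Posz (k - 2 * j + l) by lia.
have : (0 < k - 2 * j + l)%N by lia.
by case: (k - 2 * j + l)%N.
Qed.

Theorem lemma4p8 (k i : nat) :
  (0 < k)%N -> (1 <= i)%N -> (i < (k.+1)./2)%N ->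
  (('X - ((i ^ 2)%:R : rat)^-1%:P) ^+ ((k.+1)./2 - i) %| Pk k)%R.
Proof.
move=> k_gt0 i_gt0 lt_ih; set x : rat := (i ^ 2)%:R^-1.
have b_neq0 : (2 * i%:R : rat) != 0 by rewrite mulf_neq0 ?pnatr_eq0 -?lt0n.
have ctval_vanish := rec_defect_vanish i_gt0 (rec_defect_iter i (ctval_rec_defect i_gt0)).
have top_rows (j : 'I_k) : (j < (k.+1)./2)%N ->
    (row j (map_mx (horner_eval x) (Pk_mx k)) <= windows k (ctval x) 1 i)%MS.
  move=> lt_jh; rewrite row_Pk_mx_eval; last by lia.
  by apply: window_sub_windows b_neq0 ctval_vanish _ _; lia.
have -> : Pk k = \det (Pk_mx k) by [].
apply: dvdp_det_rank; apply: leq_trans (leq_add (mxrank_rows_sub top_rows) (leqnn _)) _.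
have := rank_leq_row (windows k (ctval x) 1 i); lia.
Qed.
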